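(* Let $K=(C,\langle Q_i,1\le i\le k\rangle)$ and $K'=(C',\langle Q'_j,1\le j\le l\rangle)$ be two CMIs on $X_1,\dots,X_n$, both in pure form. Then $K\sim K'$ if and only if $\mathrm{can}(K)=\mathrm{can}(K')$.
   Context: Setting: $X_1,\dots,X_n$ are jointly distributed discrete random variables with $H(X_i)<\infty$ for all $i$; the joint distribution is otherwise unspecified. Write $\mathcal N_n=\{1,\dots,n\}$, $X_\alpha=(X_i,i\in\alpha)$ for $\alpha\subseteq\mathcal N_n$, and $X_\emptyset$ is a constant. A CMI (conditional mutual independency) is a pair $K=(C,\langle Q_1,\dots,Q_k\rangle)$ with $k\ge 0$, $C\subseteq\mathcal N_n$ and $\langle Q_1,\dots,Q_k\rangle$ an unordered finite collection (multiset: repetitions allowed, order immaterial) of subsets of $\mathcal N_n$. For a given joint distribution, $K$ is valid if $\sum_{i=1}^k H(X_{Q_i}|X_C)-H(X_{Q_1},\dots,X_{Q_k}|X_C)=0$ (automatic when $k\le 1$). Members $Q_j=\emptyset$ may be deleted without changing the CMI. Two CMIs are equal if their conditioning sets are equal and their collections are equal as multisets. $K\sim K'$ means: for every joint distribution of $X_1,\dots,X_n$, $K$ and $K'$ are both valid or both invalid. $K$ is degenerate if it is valid for every joint distribution; all degenerate CMIs are identified and denoted $(\cdot,\langle\ \rangle)$. Pure form: $K$ is in pure form if $Q_i\ne\emptyset$ and $Q_i\cap C=\emptyset$ for all $i$. Canonical form of a pure $K=(C,\langle Q_1,\dots,Q_k\rangle)$: if $k\ge2$, let $\mathbb I_K$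 be the set of indices $q$ lying in at least two members $Q_{i},Q_{i'}$ ($i\ne i'$) of the collection; if $k\le1$, $\mathbb I_K=\emptyset$. Let $P_1,\dots,P_t$ be the nonempty sets among $Q_1\setminus\mathbb I_K,\dots,Q_k\setminus\mathbb I_K$ (with multiplicity). Then $\mathrm{can}(K)=(\cdot,\langle\ \rangle)$ if $k\in\{0,1\}$; $\mathrm{can}(K)=(C,\langle\mathbb I_K,\mathbb I_K\rangle)$ if $k\ge2$, $\mathbb I_K\ne\emptyset$, $t\in\{0,1\}$; $\mathrm{can}(K)=(C,\langle P_1,\dots,P_t\rangle)$ if $k\ge2$, $\mathbb I_K=\emptyset$; $\mathrm{can}(K)=(C,\langle\mathbb I_K,\mathbb I_K,P_1,\dots,P_t\rangle)$ if $k\ge2$, $\mathbb I_K\ne\emptyset$, $t\ge2$. *)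

From HB Require Import structures.
From mathcomp Require Import all_boot all_order all_algebra.
From mathcomp Require Import all_classical all_reals.
From mathcomp Require Import ereal esum exp.
Set Implicit Arguments. Unset Strict Implicit. Unset Printing Implicit Defensive.
Import Order.TTheory GRing.Theory Num.Theory.
Local Open Scope classical_set_scope.
Local Open Scope ring_scope.

Section CMI.
Variables (R : realType) (n : nat).

(* An outcome of (X_1,...,X_n): each X_i is discrete, its countable range is
   encoded injectively into nat. *)
Definition outcome := {ffun 'I_n -> nat}.

Definition is_pmf (p : outcome -> R) : Prop :=
  (forall x, 0 <= p x) /\ (\esum_(x in [set: outcome]) (p x)%:E = 1)%E.

Definition marg (p : outcome -> R) (A : {set 'I_n}) (y : outcome) : R :=
  fine (\esum_(x in [set x : outcome | forall i, i \in A -> x i = y i]) (p x)%:E).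

(* Entropy H(X_A) (natural log), possibly +oo.  Values of X_A are encoded as
   outcomes vanishing outside A. *)
Definition entropy (p : outcome -> R) (A : {set 'I_n}) : \bar R :=
  \esum_(y in [set y : outcome | forall i, i \notin A -> y i = 0])
     (- (marg p A y * ln (marg p A y)))%:E.

Definition finite_entropies (p : outcome -> R) : Prop :=
  forall i : 'I_n, (entropy p (finset.set1 i) < +oo)%E.

(* A CMI (C, <Q_1,...,Q_k>); the multiset is represented by a sequence,
   multiset equality being perm_eq. *)
Definition CMI := ({set 'I_n} * seq {set 'I_n})%type.

Definition centropy (p : outcome -> R) (A C : {set 'I_n}) : \bar R :=
  (entropy p (A :|: C) - entropy p C)%E.

Definition valid (p : outcome -> R) (K : CMI) : Prop :=
  (\sum_(Q <- K.2) centropy p Q K.1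
     - centropy p (\big[@finset.setU _/finset.set0]_(Q <- K.2) Q) K.1 = 0)%E.

Definition cmi_equiv (K K' : CMI) : Prop :=
  forall p : outcome -> R, is_pmf p -> finite_entropies p ->
    (valid p K <-> valid p K').

End CMI.

Section Canonical.
Local Close Scope classical_set_scope.
Variable n : nat.

Definition pure (K : CMI n) : bool :=
  all (fun Q => (Q != finset.set0) && [disjoint Q & K.1]) K.2.

Definition IK (K : CMI n) : {set 'I_n} :=
  [set q : 'I_n | (1 < count (fun Q : {set 'I_n} => q \in Q) K.2)%N].

Definition PK (K : CMI n) : seq {set 'I_n} :=
  seq.filter (fun P => P != finset.set0) (map (fun Q => Q :\: IK K) K.2).

(* canonical form; None stands for the degenerate CMI (.,< >) *)
Definition canform (K : CMI n) : option (CMI n) :=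
  if (size K.2 <= 1)%N then None
  else if IK K == finset.set0 then Some (K.1, PK K)
  else if (size (PK K) <= 1)%N then Some (K.1, [:: IK K; IK K])
  else Some (K.1, IK K :: IK K :: PK K).

Definition cmi_eq (K K' : CMI n) : bool := (K.1 == K'.1) && perm_eq K.2 K'.2.

Definition canform_eq (c c' : option (CMI n)) : bool :=
  match c, c' with
  | None, None => true
  | Some K, Some K' => cmi_eq K K'
  | _, _ => false
  end.

End Canonical.

(* Validity of a CMI depends only on the entropy profile A |-> H(X_A), which is a
   polymatroid (monotone and submodular, by ln x <= x - 1). For a polymatroid h
   and f(X) = h(X :|: C) - h(C), submodularity gives the chain
   f(Q_1 :|: ... :|: Q_k) + f(I_K) <= f(Q_1) + ... + f(Q_k), so K is valid iff
   f(I_K) = 0 and the residues P_j are independent; this is exactly the validity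
   of can(K), hence equal canonical forms give equivalent CMIs.
   Conversely, for T a set of indices let X be 0 or the indicator of T, each with
   probability 1/2: then H(X_A) = ln 2 if A meets T and 0 otherwise, and K is
   valid iff T meets C or meets at most one Q_i. The tests T = {c} :|: ~: C
   recover C, singletons recover I_K, and pairs {x, y} tell whether x and y lie
   in a common residue, so these test distributions determine can(K). *)
From HB Require Import structures.
From mathcomp Require Import all_boot all_order all_algebra.
From mathcomp Require Import all_classical all_reals.
From mathcomp Require Import ereal esum exp.
From mathcomp Require Import ring lra zify.
(* Re-imported so that set0, setT, subsetP, ... denote finite-set notions
   rather than their classical_sets homonyms. *)
From mathcomp Require Import fintype finset.
Set Implicit Arguments. Unset Strict Implicit. Unset Printing Implicit Defensive.
Import Order.TTheory GRing.Theory Num.Theory.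
Local Open Scope ring_scope.

Section SetSeq.
Variable T : finType.
Implicit Types (P Q : {set T}) (s L : seq {set T}) (x y : T).

Lemma mem_bigcup_seq x s :
  (x \in \bigcup_(Q <- s) Q) = has (fun Q => x \in Q) s.
Proof. by elim: s => [|Q s IH]; rewrite ?big_nil ?in_set0 // big_cons in_setU IH. Qed.

Definition same_block L x y := has (fun P => (x \in P) && (y \in P)) L.

Definition partition_seq L : Prop :=
  (forall P, P \in L -> P != set0) /\ (forall x, count (fun P => x \in P) L <= 1)%N.

Section Partition.
Variable L : seq {set T}.
Hypothesis pL : partition_seq L.

Lemma partition_seq_block_eq P P' x :
  P \in L -> P' \in L -> x \in P -> x \in P' -> P = P'.
Proof.
move=> PL P'L xP xP'; have := pL.2 x; rewrite -size_filter.
set F := seq.filter _ L.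
have : P \in F by rewrite mem_filter xP.
have : P' \in F by rewrite mem_filter xP'.
by case: F => [|Q [|//]]; rewrite ?inE // => /eqP-> /eqP->.
Qed.

Lemma partition_seq_uniq : uniq L.
Proof.
apply: count_mem_uniq => P; have [PL|/count_memPn //] := boolP (P \in L).
have /set0Pn[x xP] := pL.1 P PL.
have : (count_mem P L <= count (fun Q => x \in Q) L)%N.
  by apply: sub_count => Q /eqP->.
have := pL.2 x; have : (0 < count_mem P L)%N by rewrite -has_count has_pred1.
by lia.
Qed.

Lemma same_blockE P x : P \in L -> x \in P ->
  forall y, same_block L x y = (y \in P).
Proof.
move=> PL xP y; apply/hasP/idP => [[Q QL /andP[xQ yQ]]|yP]; last by exists P; rewrite ?xP.
by rewrite (partition_seq_block_eq PL QL xP xQ).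
Qed.

End Partition.

Lemma exists_other_block L x : partition_seq L -> (1 < size L)%N ->
  x \in \bigcup_(P <- L) P ->
  exists2 y, y \in \bigcup_(P <- L) P & ~~ same_block L x y.
Proof.
move=> pL; case: L pL (partition_seq_uniq pL) => [|P1 [|P2 r]] // pL' uL _ _.
have P1L : P1 \in [:: P1, P2 & r] by rewrite mem_head.
have P2L : P2 \in [:: P1, P2 & r] by rewrite !inE eqxx orbT.
have inU y P : P \in [:: P1, P2 & r] -> y \in P -> y \in \bigcup_(Q <- [:: P1, P2 & r]) Q.
  by move=> PL yP; rewrite mem_bigcup_seq; apply/hasP; exists P.
have P12 : P1 != P2 by move: uL; rewrite /= inE negb_or => /andP[/andP[]].
have [xP1|xNP1] := boolP (x \in P1).
  have /set0Pn[y yP2] := pL'.1 P2 P2L.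
  exists y; first exact: inU yP2.
  rewrite (same_blockE pL' P1L xP1); apply: contraNN P12 => yP1.
  by rewrite (partition_seq_block_eq pL' P1L P2L yP1 yP2).
have /set0Pn[y yP1] := pL'.1 P1 P1L.
exists y; first exact: inU yP1.
apply/hasP => -[P PL /andP[xP yP]].
by move: xNP1; rewrite -(partition_seq_block_eq pL' PL P1L yP yP1) xP.
Qed.

Lemma same_block_bigcup L x y : same_block L x y -> y \in \bigcup_(P <- L) P.
Proof. by move=> /hasP[P PL /andP[_ yP]]; rewrite mem_bigcup_seq; apply/hasP; exists P. Qed.

Lemma same_block_small L x y : (size L <= 1)%N ->
  x \in \bigcup_(P <- L) P -> y \in \bigcup_(P <- L) P -> same_block L x y.
Proof.
case: L => [|P [|//]] _; first by rewrite big_nil inE.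
by rewrite /same_block /= big_cons big_nil setU0 orbF => -> ->.
Qed.

Lemma perm_partition_seq L L' : partition_seq L -> partition_seq L' ->
  \bigcup_(P <- L) P = \bigcup_(P <- L') P ->
  (forall x y, x \in \bigcup_(P <- L) P -> y \in \bigcup_(P <- L) P ->
     same_block L x y = same_block L' x y) ->
  perm_eq L L'.
Proof.
have sub L1 L2 : partition_seq L1 -> partition_seq L2 ->
    \bigcup_(P <- L1) P = \bigcup_(P <- L2) P ->
    (forall x y, x \in \bigcup_(P <- L1) P -> y \in \bigcup_(P <- L1) P ->
       same_block L1 x y = same_block L2 x y) ->
    {subset L1 <= L2}.
  move=> pL1 pL2 eU same P PL1; have /set0Pn[x xP] := pL1.1 P PL1.
  have xU : x \in \bigcup_(Q <- L1) Q by rewrite mem_bigcup_seq; apply/hasP; exists P.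
  have := xU; rewrite eU mem_bigcup_seq => /hasP[P' P'L2 xP'].
  suff -> : P = P' by [].
  apply/setP => y; rewrite -(same_blockE pL1 PL1 xP) -(same_blockE pL2 P'L2 xP').
  have [yU|yNU] := boolP (y \in \bigcup_(Q <- L1) Q); first exact: same.
  by apply/idP/idP => /same_block_bigcup; rewrite -?eU (negbTE yNU).
move=> pL pL' eU same; apply: uniq_perm; try exact: partition_seq_uniq.
move=> P; apply/idP/idP; first exact: sub.
apply: sub pL' pL (esym eU) _ P => x y; rewrite -eU => xU yU.
by rewrite same.
Qed.

Definition overlap s : {set T} :=
  [set q | 1 < count (fun Q => q \in Q) s]%N.

Definition residues s : seq {set T} :=
  seq.filter (fun P => P != set0) [seq Q :\: overlap s | Q <- s].

Lemma overlap_cons Q s :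
  overlap (Q :: s) = overlap s :|: (Q :&: \bigcup_(P <- s) P).
Proof.
apply/setP => q; rewrite !inE mem_bigcup_seq has_count /=.
by case: (q \in Q) => /=; case: (count _ s) => [|[|m]].
Qed.

Lemma bigcup_residues s :
  \bigcup_(P <- residues s) P = (\bigcup_(Q <- s) Q) :\: overlap s.
Proof.
rewrite /residues; move: (overlap s) => I.
elim: s => [|Q s IH] /=; first by rewrite !big_nil set0D.
rewrite big_cons setDUl -IH; case: eqP => [->|_]; last by rewrite big_cons.
by rewrite set0U.
Qed.

Lemma partition_seq_residues s : partition_seq (residues s).
Proof.
split=> [P|x]; first by rewrite mem_filter => /andP[].
rewrite count_filter count_map.
have [xI|xNI] := boolP (x \in overlap s).
  by rewrite (eq_count (a2 := pred0)) ?count_pred0 // => Q /=; rewrite inE xI.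
move: xNI; rewrite inE -leqNgt; apply: leq_trans; apply: sub_count => Q /=.
by rewrite inE => /andP[/andP[]].
Qed.

Lemma same_block_residues s x y : x \notin overlap s -> y \notin overlap s ->
  same_block (residues s) x y = has (fun Q => (x \in Q) && (y \in Q)) s.
Proof.
rewrite /same_block /residues; move: (overlap s) => I xI yI.
elim: s => [|Q s IH] //=; case: eqP => [Q0|_] /=; last by rewrite IH !inE xI yI.
rewrite IH; case xQ: (x \in Q) => //=.
by move: Q0 => /setP/(_ x); rewrite !inE xQ xI.
Qed.

End SetSeq.

Lemma IKE n (K : CMI n) : IK K = overlap K.2. Proof. by []. Qed.
Lemma PKE n (K : CMI n) : PK K = residues K.2. Proof. by []. Qed.

Section Polymatroid.
Variables (R : realDomainType) (n : nat) (h : {set 'I_n} -> R).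
Hypotheses (h_mono : forall A B : {set 'I_n}, A \subset B -> h A <= h B)
  (h_submod : forall A B : {set 'I_n}, h (A :|: B) + h (A :&: B) <= h A + h B).
Implicit Types (C I X Y : {set 'I_n}) (s : seq {set 'I_n}).

Definition hc C X := h (X :|: C) - h C.

Definition hvalid (K : CMI n) : Prop :=
  \sum_(Q <- K.2) hc K.1 Q = hc K.1 (\bigcup_(Q <- K.2) Q).

Section Conditional.
Variable C : {set 'I_n}.

Lemma hc_set0 : hc C set0 = 0.
Proof. by rewrite /hc set0U subrr. Qed.

Lemma hc_ge0 X : 0 <= hc C X.
Proof. by rewrite /hc subr_ge0 h_mono // subsetUr. Qed.

Lemma hc_mono X Y : X \subset Y -> hc C X <= hc C Y.
Proof. by move=> XY; rewrite /hc lerD2r h_mono // setSU. Qed.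

Lemma hc_submod X Y : hc C (X :|: Y) + hc C (X :&: Y) <= hc C X + hc C Y.
Proof.
have := h_submod (X :|: C) (Y :|: C).
by rewrite /hc -setUUl -setUIl; lra.
Qed.

Lemma hc_subadd X Y : hc C (X :|: Y) <= hc C X + hc C Y.
Proof. by have := hc_submod X Y; have := hc_ge0 (X :&: Y); lra. Qed.

Lemma hc_bigcup_overlap s :
  hc C (\bigcup_(Q <- s) Q) + hc C (overlap s) <= \sum_(Q <- s) hc C Q.
Proof.
elim: s => [|Q s IH].
  have -> : overlap [::] = set0 :> {set 'I_n} by apply/setP => q; rewrite !inE.
  by rewrite !big_nil hc_set0 addr0.
rewrite !big_cons overlap_cons.
have := hc_submod Q (\bigcup_(P <- s) P).
have := hc_submod (overlap s) (Q :&: \bigcup_(P <- s) P).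
have := hc_ge0 (overlap s :&: (Q :&: \bigcup_(P <- s) P)).
lra.
Qed.

Lemma hc_bigcup_le s : hc C (\bigcup_(Q <- s) Q) <= \sum_(Q <- s) hc C Q.
Proof. by have := hc_bigcup_overlap s; have := hc_ge0 (overlap s); lra. Qed.

Lemma hc_setU_null I X : hc C I = 0 -> hc C (X :|: I) = hc C X.
Proof.
move=> hI; have := hc_subadd X I; have := hc_mono (subsetUl X I); lra.
Qed.

Lemma hc_setD_null I X : hc C I = 0 -> hc C (X :\: I) = hc C X.
Proof.
move=> hI; rewrite -(hc_setU_null X hI) -(hc_setU_null (X :\: I) hI).
by congr hc; apply/setP => x; rewrite !inE; case: (x \in I); rewrite ?orbT ?andbT.
Qed.

End Conditional.

Lemma hvalid_overlap C s :
  hvalid (C, s) <-> hc C (overlap s) = 0 /\ hvalid (C, residues s).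
Proof.
have sum_residues : \sum_(P <- residues s) hc C P = \sum_(Q <- s) hc C (Q :\: overlap s).
  rewrite /residues bigop.big_filter big_mkcond big_map /=.
  by apply: eq_bigr => Q _; case: eqP => // ->; rewrite hc_set0.
rewrite /hvalid /= sum_residues bigcup_residues; split => [E|[hI E]].
  have hI : hc C (overlap s) = 0.
    by have := hc_bigcup_overlap C s; have := hc_ge0 C (overlap s); lra.
  split=> //; rewrite hc_setD_null // -E.
  by apply: eq_bigr => Q _; rewrite hc_setD_null.
rewrite -(hc_setD_null _ hI) -E.
by apply: eq_bigr => Q _; rewrite hc_setD_null.
Qed.

Lemma hvalid_double C I s :
  hvalid (C, [:: I, I & s]) <-> hc C I = 0 /\ hvalid (C, s).
Proof.
rewrite /hvalid /= !big_cons setUA setUid setUC; split => [E|[hI E]].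
  have hI : hc C I = 0.
    have := hc_subadd C (\bigcup_(Q <- s) Q) I; have := hc_bigcup_le C s.
    have := hc_ge0 C I; lra.
  by split=> //; move: E; rewrite hc_setU_null // hI !add0r.
by rewrite hc_setU_null // hI !add0r E.
Qed.

Lemma hvalid_small (K : CMI n) : (size K.2 <= 1)%N -> hvalid K.
Proof.
case: K => C [|Q [|//]] _; rewrite /hvalid /= ?big_nil ?hc_set0 //.
by rewrite !big_cons !big_nil addr0 setU0.
Qed.

Definition hvalid_can (c : option (CMI n)) : Prop :=
  if c is Some K then hvalid K else True.

Lemma hvalid_canform (K : CMI n) : hvalid K <-> hvalid_can (canform K).
Proof.
case: K => C s; rewrite /canform /=.
case: ifP => [s1|_]; first by split=> // _; exact: hvalid_small.
rewrite hvalid_overlap IKE PKE /=.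
case: eqP => [->|_] /=; first by rewrite hc_set0; split=> [[]|].
case: ifP => [t1|_] /=; last by rewrite hvalid_double.
rewrite (hvalid_double C (overlap s) [::]).
by split=> -[hI _]; split=> //; exact: hvalid_small.
Qed.

Lemma hvalid_canform_eq (K K' : CMI n) :
  canform_eq (canform K) (canform K') -> hvalid K <-> hvalid K'.
Proof.
rewrite (hvalid_canform K) (hvalid_canform K').
case: (canform K) (canform K') => [[C s]|] [[C' s']|] //= /andP[/eqP/= <- ps].
by rewrite /hvalid /= (perm_big _ ps) (perm_big _ ps).
Qed.

End Polymatroid.

Lemma count_predU_le1 (T : Type) (a b : pred T) (s : seq T) :
  (count a s <= 1)%N -> (count b s <= 1)%N ->
  (count (predU a b) s <= 1)%N = ~~ [&& has a s, has b s & ~~ has (predI a b) s].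
Proof.
rewrite !has_count => a1 b1.
have := count_predUI a b s.
have : (count (predI a b) s <= count a s)%N by apply: sub_count => x /andP[].
have : (count (predI a b) s <= count b s)%N by apply: sub_count => x /andP[].
move: (count (predU a b) s) a1 b1 => u.
by case: (count a s) => [|[|//]]; case: (count b s) => [|[|//]];
  case: (count (predI a b) s) => [|[|//]] /= *; lia.
Qed.

Section TestSets.
Variable n : nat.
Implicit Types (T Q : {set 'I_n}) (K : CMI n) (x y : 'I_n).

(* The validity of K under [test_pmf T] below, see [hvalid_test_rank]. *)
Definition test_valid T K : bool :=
  (T :&: K.1 != set0) || (count (fun Q => T :&: Q != set0) K.2 <= 1)%N.

Lemma pure_mem K Q : pure K -> Q \in K.2 -> Q != set0 /\ [disjoint Q & K.1].
Proof. by move=> /allP pK /pK /andP. Qed.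

Lemma pure_notin_cond K Q x : pure K -> Q \in K.2 -> x \in Q -> x \notin K.1.
Proof. by move=> pK QK xQ; have [_ dQ] := pure_mem pK QK; rewrite (disjointFr dQ xQ). Qed.

Lemma setI1_neq0 x Q : ([set x] :&: Q != set0) = (x \in Q).
Proof. by rewrite setI_eq0 disjoints1 negbK. Qed.

Lemma setI2_neq0 x y Q : ([set x; y] :&: Q != set0) = (x \in Q) || (y \in Q).
Proof. by rewrite setIUl setU_eq0 negb_and !setI1_neq0. Qed.

Lemma test_valid_small T K : (size K.2 <= 1)%N -> test_valid T K.
Proof. by move=> s1; rewrite /test_valid (leq_trans (count_size _ _)) ?orbT. Qed.

Lemma test_valid_cocond T K : pure K -> T :&: K.1 = set0 -> ~: K.1 \subset T ->
  test_valid T K = (size K.2 <= 1)%N.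
Proof.
move=> pK TC CT; rewrite /test_valid TC eqxx /=; congr (_ <= 1)%N.
apply/eqP; rewrite -all_count; apply/allP => Q QK; have [Q0 dQ] := pure_mem pK QK.
move: dQ; rewrite disjoints_subset => QC.
by rewrite (setIidPr (subset_trans QC CT)).
Qed.

Lemma test_valid1 x K :
  test_valid [set x] K = (x \in K.1) || (count (fun Q => x \in Q) K.2 <= 1)%N.
Proof. by rewrite /test_valid setI1_neq0; under eq_count do rewrite setI1_neq0. Qed.

Lemma test_valid2 x y K : x \notin overlap K.2 -> y \notin overlap K.2 ->
  x \notin K.1 -> y \notin K.1 ->
  test_valid [set x; y] K =
  ~~ [&& x \in \bigcup_(P <- residues K.2) P, y \in \bigcup_(P <- residues K.2) P
       & ~~ same_block (residues K.2) x y].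
Proof.
move=> xI yI xC yC; rewrite /test_valid setI2_neq0 (negbTE xC) (negbTE yC) /=.
under eq_count do rewrite setI2_neq0.
rewrite same_block_residues // bigcup_residues !in_setD xI yI !mem_bigcup_seq.
by move: xI yI; rewrite !inE -!leqNgt; apply: count_predU_le1.
Qed.

Lemma test_valid_cond_subset K K' : pure K' -> (1 < size K'.2)%N ->
  (forall T, test_valid T K = test_valid T K') -> K.1 \subset K'.1.
Proof.
move=> pK' s2 same; apply/subsetP => c cC; apply: contraTT s2 => cNC'.
have TC' : (c |: ~: K'.1) :&: K'.1 = set0.
  apply/setP => z; rewrite !inE; case: eqP => [->|_] /=; first by rewrite (negbTE cNC').
  by rewrite andNb.
rewrite -leqNgt -(test_valid_cocond pK' TC' (subsetUr _ _)) -same /test_valid.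
by apply/orP; left; apply/set0Pn; exists c; rewrite !inE eqxx cC.
Qed.

Lemma test_valid_overlap_subset K K' : pure K ->
  (forall T, test_valid T K = test_valid T K') -> overlap K.2 \subset overlap K'.2.
Proof.
move=> pK same; apply/subsetP => x; rewrite !inE => x2.
have /hasP[Q QK xQ] : has (fun Q => x \in Q) K.2 by rewrite has_count (ltn_trans _ x2).
have := same [set x]; rewrite !test_valid1 (negbTE (pure_notin_cond pK QK xQ)) /=.
by rewrite leqNgt x2 => /esym/norP[_]; rewrite -ltnNge.
Qed.

Lemma mem_bigcup_residues K x : pure K -> x \in \bigcup_(P <- residues K.2) P ->
  x \notin overlap K.2 /\ x \notin K.1.
Proof.
rewrite bigcup_residues in_setD => pK /andP[xI xU]; split=> //.
by move: xU; rewrite mem_bigcup_seq => /hasP[Q QK xQ]; exact: pure_notin_cond pK QK xQ.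
Qed.

End TestSets.

Section SameTests.
Variables (n : nat) (K K' : CMI n).
Hypotheses (pK : pure K) (pK' : pure K') (eC : K.1 = K'.1)
  (eI : overlap K.2 = overlap K'.2)
  (same : forall T, test_valid T K = test_valid T K').

Lemma same_test_valid2 x y : x \notin overlap K.2 -> y \notin overlap K.2 ->
  x \notin K.1 -> y \notin K.1 ->
  [&& x \in \bigcup_(P <- residues K.2) P, y \in \bigcup_(P <- residues K.2) P
    & ~~ same_block (residues K.2) x y] =
  [&& x \in \bigcup_(P <- residues K'.2) P, y \in \bigcup_(P <- residues K'.2) P
    & ~~ same_block (residues K'.2) x y].
Proof.
move=> xI yI xC yC; apply: negb_inj.
by rewrite -test_valid2 // same test_valid2 -?eI -?eC.
Qed.

Lemma residues_size_gt1 : (1 < size (residues K'.2))%N -> (1 < size (residues K.2))%N.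
Proof.
move=> s2; rewrite ltnNge; apply/negP => s1.
have pL' := partition_seq_residues K'.2.
have [x xU'] : exists x, x \in \bigcup_(P <- residues K'.2) P.
  case: (residues K'.2) pL' s2 => [|P [|P2 r]] // [nz _] _.
  have /set0Pn[x xP] := nz P (mem_head _ _).
  by exists x; rewrite big_cons in_setU xP.
have [y yU' ns'] := exists_other_block pL' s2 xU'.
have [xI xC] := mem_bigcup_residues pK' xU'; have [yI yC] := mem_bigcup_residues pK' yU'.
have := same_test_valid2 (x := x) (y := y); rewrite eI eC xU' yU' ns' => /(_ xI yI xC yC).
have := same_block_small (x := x) (y := y) s1.
by case: (x \in _); case: (y \in _) => // ->.
Qed.

Lemma bigcup_residues_subset : (1 < size (residues K.2))%N ->
  \bigcup_(P <- residues K.2) P \subset \bigcup_(P <- residues K'.2) P.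
Proof.
move=> s2; apply/subsetP => x xU; apply/negPn/negP => xNU'.
have [y yU ns] := exists_other_block (partition_seq_residues K.2) s2 xU.
have [xI xC] := mem_bigcup_residues pK xU; have [yI yC] := mem_bigcup_residues pK yU.
by have := same_test_valid2 xI yI xC yC; rewrite xU yU ns (negbTE xNU').
Qed.

End SameTests.

Lemma perm_residues n (K K' : CMI n) : pure K -> pure K' -> K.1 = K'.1 ->
  overlap K.2 = overlap K'.2 -> (forall T, test_valid T K = test_valid T K') ->
  (1 < size (residues K.2))%N -> (1 < size (residues K'.2))%N ->
  perm_eq (residues K.2) (residues K'.2).
Proof.
move=> pK pK' eC eI same s2 s2'.
have eU : \bigcup_(P <- residues K.2) P = \bigcup_(P <- residues K'.2) P.
  by apply/eqP; rewrite eqEsubset !bigcup_residues_subset.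
apply: (perm_partition_seq (partition_seq_residues _) (partition_seq_residues _) eU).
move=> x y xU yU; have [xI xC] := mem_bigcup_residues pK xU.
have [yI yC] := mem_bigcup_residues pK yU.
have := same_test_valid2 eC eI same xI yI xC yC.
by rewrite xU yU -eU xU yU /= => /negb_inj.
Qed.

Lemma residues_overlap0 n (K : CMI n) :
  pure K -> overlap K.2 = set0 -> residues K.2 = K.2.
Proof.
move=> pK I0; rewrite /residues I0.
under eq_map do rewrite setD0.
by rewrite map_id; apply/all_filterP/allP => Q QK; exact: (pure_mem pK QK).1.
Qed.

Section TestValidEq.
Variables (n : nat) (K K' : CMI n).
Hypotheses (pK : pure K) (pK' : pure K')
  (same : forall T, test_valid T K = test_valid T K').

Lemma test_valid_size_le1 : (size K.2 <= 1)%N -> (size K'.2 <= 1)%N.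
Proof.
have CC : ~: K'.1 :&: K'.1 = set0 by rewrite setIC setICr.
by move=> s1; rewrite -(test_valid_cocond pK' CC (subxx _)) -same test_valid_small.
Qed.

Lemma test_valid_cond_eq : (1 < size K.2)%N -> (1 < size K'.2)%N -> K.1 = K'.1.
Proof.
move=> s2 s2'; have same' T : test_valid T K' = test_valid T K by rewrite same.
apply/eqP; rewrite eqEsubset.
by rewrite (test_valid_cond_subset pK' s2' same) (test_valid_cond_subset pK s2 same').
Qed.

Lemma test_valid_overlap_eq : overlap K.2 = overlap K'.2.
Proof.
have same' T : test_valid T K' = test_valid T K by rewrite same.
apply/eqP; rewrite eqEsubset.
by rewrite (test_valid_overlap_subset pK same) (test_valid_overlap_subset pK' same').
Qed.

End TestValidEq.

Lemma canform_eq_of_test_valid n (K K' : CMI n) : pure K -> pure K' ->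
  (forall T, test_valid T K = test_valid T K') -> canform_eq (canform K) (canform K').
Proof.
move=> pK pK' same; have same' T : test_valid T K' = test_valid T K by rewrite same.
rewrite /canform !IKE !PKE.
have [s1|s2] := boolP (size K.2 <= 1)%N; first by rewrite (test_valid_size_le1 pK' same).
have [s1'|s2'] := boolP (size K'.2 <= 1)%N.
  by rewrite (test_valid_size_le1 pK same') in s2.
rewrite -!ltnNge in s2 s2'; have eC := test_valid_cond_eq pK pK' same s2 s2'.
have eI := test_valid_overlap_eq pK pK' same.
rewrite /= -eI; have [I0|I0] := eqVneq (overlap K.2) set0 => /=.
  rewrite /cmi_eq eC eqxx /=; apply: perm_residues => //.
    by rewrite residues_overlap0.
  by rewrite residues_overlap0 // -eI.
have [t1|t2] := boolP (size (residues K.2) <= 1)%N;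
  have [t1'|t2'] := boolP (size (residues K'.2) <= 1)%N; rewrite /= /cmi_eq /= eC eqxx //=.
- by move: t1; rewrite leqNgt (residues_size_gt1 pK' eC eI same) // ltnNge.
- by move: t1'; rewrite leqNgt (residues_size_gt1 pK (esym eC) (esym eI) same') // ltnNge.
by rewrite !perm_cons perm_residues // ltnNge.
Qed.

Section EsumFacts.
Local Open Scope classical_set_scope.
Local Open Scope ereal_scope.
Variables (R : realType) (T : choiceType).
Implicit Types (A B S : set T) (f : T -> \bar R).

Lemma esum_le_subset A B f : A `<=` B -> (forall x, B x -> 0 <= f x) ->
  \esum_(x in A) f x <= \esum_(x in B) f x.
Proof.
move=> AB f0; rewrite esum_mkcond [leRHS]esum_mkcond; apply: le_esum => x _.
case: ifPn => [/set_mem /AB Bx|_]; first by rewrite ifT //; exact: mem_set.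
by case: ifPn => // /set_mem /f0.
Qed.

Lemma esumZl S (c : R) (g : T -> R) : (0 <= c)%R ->
  \esum_(x in S) (c * g x)%:E = c%:E * \esum_(x in S) (g x)%:E.
Proof.
move=> c0; rewrite /esum -ereal_supZl //; last first.
  apply/set0P; exists (\sum_(x \in classical_sets.set0) (g x)%:E).
  by exists classical_sets.set0 => //; exact: fsets_set0.
rewrite image_comp; congr ereal_sup; apply: eq_imagel => F [finF _] /=.
by rewrite !fsumEFin // -EFinM fsbig_distrr.
Qed.

Lemma esum_fibers (U : choiceType) A (V : set U) (g : T -> U) f :
  (forall x, A x -> V (g x)) -> (forall x, A x -> 0 <= f x) ->
  \esum_(x in A) f x = \esum_(u in V) \esum_(x in [set x | A x /\ g x = u]) f x.
Proof.
move=> gA f0; rewrite esum_esum; last by move=> u x _ [Ax _]; exact: f0.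
rewrite (reindex_esum A _ (fun x => (g x, x))) //; split.
- by move=> x Ax /=; split; [exact: gA|].
- by move=> x y _ _ [].
- by move=> [u x] /= [Vu [Ax <-]]; exists x.
Qed.

Lemma esum_dirac S z (c : R) : (0 <= c)%R ->
  \esum_(x in S) (c * (x == z)%:R)%:E = if z \in S then c%:E else 0.
Proof.
move=> c0; rewrite (esumID [set z]); last by move=> x _; rewrite lee_fin mulr_ge0.
rewrite [X in _ + X]esum1 ?adde0; last by move=> x [_ /eqP/negPf ->]; rewrite mulr0.
case: ifPn => [/set_mem Sz|/negP Sz].
  have -> : S `&` [set z] = [set z] by apply/seteqP; split => [x []//|x /= ->].
  by rewrite esum_set1 ?eqxx ?mulr1 // lee_fin.
have -> : S `&` [set z] = classical_sets.set0.
  by apply/seteqP; split => [x [Sx /= xz]|x //]; apply: Sz; apply: mem_set; rewrite -xz.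
by rewrite esum_set0.
Qed.

End EsumFacts.

Lemma ln_submod_gap (R : realType) (mU mA mB mZ : R) :
  0 <= mU -> mU <= mA -> mU <= mB -> mA <= mZ ->
  mU - mA * mB / mZ <= mU * (ln mU + ln mZ - ln mA - ln mB).
Proof.
move=> mU0 mUA mUB mAZ; have [->|mU_neq0] := eqVneq mU 0.
  by rewrite mul0r subr_le0 divr_ge0 ?mulr_ge0 //; lra.
have mU_gt0 : 0 < mU by rewrite lt0r mU_neq0.
have [mA_gt0 mB_gt0 mZ_gt0] : [/\ 0 < mA, 0 < mB & 0 < mZ] by split; lra.
pose r := mA * mB / (mU * mZ).
have r_gt0 : 0 < r by rewrite divr_gt0 ?mulr_gt0.
have ln_r : ln r = ln mA + ln mB - ln mU - ln mZ.
  by rewrite ln_div ?posrE ?mulr_gt0 // !lnM ?posrE //; ring.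
have -> : mA * mB / mZ = mU * r by rewrite /r; field; rewrite mU_neq0 gt_eqF.
have : ln (1 + (r - 1)) <= r - 1 by apply: le_ln1Dx; lra.
rewrite (_ : 1 + (r - 1) = r) ?ln_r => [ln_le|]; last by ring.
have : mU * (1 - r) <= mU * (ln mU + ln mZ - ln mA - ln mB) by rewrite ler_wpM2l //; lra.
lra.
Qed.

Section Entropy.
Local Open Scope classical_set_scope.
Local Open Scope ereal_scope.
Variables (R : realType) (n : nat) (p : outcome n -> R).
Hypothesis pmf : is_pmf p.
Implicit Types (A B D E U : {set 'I_n}) (x y w : outcome n).

Definition vals A : set (outcome n) := [set y | forall i, i \notin A -> y i = 0%N].

Definition agree A y : set (outcome n) := [set x | forall i, i \in A -> x i = y i].

Definition restr A x : outcome n := [ffun i => if i \in A then x i else 0%N].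

Lemma pmf_ge0 x : (0 <= p x)%R. Proof. exact: pmf.1. Qed.

Lemma esum_agree_le1 A y : \esum_(x in agree A y) (p x)%:E <= 1.
Proof. by rewrite -pmf.2; apply: esum_le_subset => // x _; rewrite lee_fin pmf_ge0. Qed.

Lemma margE A y : (marg p A y)%:E = \esum_(x in agree A y) (p x)%:E.
Proof.
rewrite /marg fineK // ge0_fin_numE ?(le_lt_trans (esum_agree_le1 A y)) ?ltry //.
by apply: esum_ge0 => x _; rewrite lee_fin pmf_ge0.
Qed.

Lemma marg_ge0 A y : (0 <= marg p A y)%R.
Proof. by rewrite -lee_fin margE; apply: esum_ge0 => x _; rewrite lee_fin pmf_ge0. Qed.

Lemma marg_le1 A y : (marg p A y <= 1)%R.
Proof. by rewrite -lee_fin margE esum_agree_le1. Qed.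

Lemma vals_restr A x : vals A (restr A x).
Proof. by move=> i iA; rewrite ffunE (negPf iA). Qed.

Lemma agree_restr A D w : D \subset A -> agree D (restr A w) = agree D w.
Proof.
move=> DA; apply/seteqP; split => x /= xw i iD; rewrite xw // ffunE.
  by rewrite (subsetP DA).
by rewrite (subsetP DA).
Qed.

Lemma marg_restr A D w : D \subset A -> marg p D (restr A w) = marg p D w.
Proof. by move=> DA; rewrite /marg -/(agree D _) -/(agree D w) agree_restr. Qed.

Lemma marg_le_subset A B w : A \subset B -> (marg p B w <= marg p A w)%R.
Proof.
move=> AB; rewrite -lee_fin !margE; apply: esum_le_subset => [x /= xw i iA|x _].
  by rewrite xw // (subsetP AB).
by rewrite lee_fin pmf_ge0.
Qed.

Lemma fiber_restr D E y : vals D y ->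
  [set w | vals E w /\ restr D w = y] = vals E `&` agree D y.
Proof.
move=> Vy; apply/seteqP; split => w /=.
  by move=> [Vw <-]; split => // i iD; rewrite ffunE iD.
move=> [Vw Dw]; split => //; apply/ffunP => i; rewrite ffunE.
by case: ifPn => [/Dw //|/Vy ->].
Qed.

Lemma marg_fibers D E y : D \subset E ->
  (marg p D y)%:E = \esum_(w in vals E `&` agree D y) (marg p E w)%:E.
Proof.
move=> DE; rewrite margE (esum_fibers (g := restr E) (V := vals E `&` agree D y)).
- apply: eq_esum => w [Vw Dw]; rewrite margE; congr esum.
  apply/seteqP; split => x /=; first by move=> [Dx <-] i iE; rewrite ffunE iE.
  move=> Ex; split; first by move=> i iD; rewrite Ex ?(subsetP DE) // Dw.
  by apply/ffunP => i; rewrite ffunE; case: ifPn => [/Ex //|/Vw ->].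
- move=> x /= Dx; split; first exact: vals_restr.
  by move=> i iD; rewrite ffunE (subsetP DE) // Dx.
- by move=> x _; rewrite lee_fin pmf_ge0.
Qed.

Lemma agree_set0 y : agree set0 y = [set: outcome n].
Proof. by apply/seteqP; split => x // _ i; rewrite in_set0. Qed.

Lemma esum_marg E : \esum_(w in vals E) (marg p E w)%:E = 1.
Proof.
have := marg_fibers [ffun=> 0%N] (sub0set E).
by rewrite agree_set0 classical_sets.setIT margE agree_set0 pmf.2 => <-.
Qed.

Lemma esum_marg_restr D E (g : outcome n -> R) : D \subset E -> (forall y, 0 <= g y)%R ->
  \esum_(y in vals D) (g y * marg p D y)%:E =
  \esum_(w in vals E) (g (restr D w) * marg p E w)%:E.
Proof.
move=> DE g0; symmetry.
rewrite (esum_fibers (g := restr D) (V := vals D)); last 2 first.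
- by move=> x _; exact: vals_restr.
- by move=> x _; rewrite lee_fin mulr_ge0 ?g0 ?marg_ge0.
apply: eq_esum => y Vy; rewrite fiber_restr // EFinM (marg_fibers y DE).
rewrite -esumZl ?g0 //; apply: eq_esum => w [Vw Dw].
have -> // : restr D w = y.
by apply/ffunP => i; rewrite ffunE; case: ifPn => [/Dw //|/Vy ->].
Qed.

Definition surprisal A w : R := - ln (marg p A w).

Lemma surprisal_ge0 A w : (0 <= surprisal A w)%R.
Proof. by rewrite oppr_ge0 ln_le0 // marg_le1. Qed.

Lemma entropy_lift A U : A \subset U ->
  entropy p A = \esum_(w in vals U) (surprisal A w * marg p U w)%:E.
Proof.
move=> AU; transitivity (\esum_(y in vals A) (surprisal A y * marg p A y)%:E).
  by apply: eq_esum => y _; rewrite /surprisal mulNr mulrC.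
rewrite (esum_marg_restr AU (surprisal_ge0 A)); apply: eq_esum => w _.
by rewrite /surprisal marg_restr.
Qed.

Lemma entropy_ge0 A : 0 <= entropy p A.
Proof.
rewrite (entropy_lift (subxx A)); apply: esum_ge0 => w _.
by rewrite lee_fin mulr_ge0 ?surprisal_ge0 ?marg_ge0.
Qed.

Lemma entropy_set0 : entropy p set0 = 0.
Proof.
rewrite /entropy esum1 // => y _.
have -> : marg p set0 y = 1%R by rewrite /marg -/(agree set0 y) agree_set0 pmf.2.
by rewrite ln1 mulr0 oppr0.
Qed.

Lemma entropy_mono A B : A \subset B -> entropy p A <= entropy p B.
Proof.
move=> AB; rewrite (entropy_lift AB) (entropy_lift (subxx B)); apply: le_esum => w _.
rewrite lee_fin; have [->|mB0] := eqVneq (marg p B w) 0%R; first by rewrite !mulr0.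
have mB : (0 < marg p B w)%R by rewrite lt0r mB0 marg_ge0.
rewrite ler_wpM2r ?marg_ge0 // lerN2 ler_ln ?posrE ?marg_le_subset //.
exact: lt_le_trans mB (marg_le_subset w AB).
Qed.

Section Coupling.
Variables (A B : {set 'I_n}) (a : outcome n).
Let F := [set w | vals (A :|: B) w /\ restr A w = a].

Lemma restr_inj_fiber : set_inj F (restr B).
Proof.
move=> w w' /set_mem[Vw ew] /set_mem[Vw' ew'] eB; apply/ffunP => i.
have [iA|iNA] := boolP (i \in A).
  by have /ffunP/(_ i) := etrans ew (esym ew'); rewrite !ffunE iA.
have [iB|iNB] := boolP (i \in B); first by have /ffunP/(_ i) := eB; rewrite !ffunE iB.
by rewrite Vw ?Vw' // in_setU negb_or iNA iNB.
Qed.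

Lemma esum_marg_fiber_le : \esum_(w in F) (marg p B w)%:E <= (marg p (A :&: B) a)%:E.
Proof.
have -> : \esum_(w in F) (marg p B w)%:E = \esum_(b in restr B @` F) (marg p B b)%:E.
  rewrite esum_image; last exact: restr_inj_fiber.
  by apply: eq_esum => w _; rewrite marg_restr.
rewrite (marg_fibers a (subsetIr A B)).
apply: esum_le_subset => [_ [w [_ ew] <-]|b _]; last by rewrite lee_fin marg_ge0.
split=> [|i iAB]; first exact: vals_restr.
by rewrite ffunE (subsetP (subsetIr A B)) // -ew ffunE (subsetP (subsetIl A B)).
Qed.

End Coupling.

(* The summand is the law of X_(A :|: B) under which X_A and X_B are
   conditionally independent given X_(A :&: B). *)
Lemma esum_coupling_le1 A B :
  \esum_(w in vals (A :|: B)) (marg p A w * marg p B w / marg p (A :&: B) w)%:E <= 1.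
Proof.
rewrite (esum_fibers (g := restr A) (V := vals A)); last 2 first.
- by move=> x _; exact: vals_restr.
- by move=> w _; rewrite lee_fin divr_ge0 ?mulr_ge0 ?marg_ge0.
rewrite -(esum_marg A); apply: le_esum => a Va.
rewrite (eq_esum (b := fun w => (marg p A a / marg p (A :&: B) a * marg p B w)%:E)).
  rewrite esumZl ?divr_ge0 ?marg_ge0 //.
  apply: le_trans (lee_wpmul2l _ (esum_marg_fiber_le A B a)) _.
    by rewrite lee_fin divr_ge0 ?marg_ge0.
  rewrite -EFinM lee_fin; have [->|nz] := eqVneq (marg p (A :&: B) a) 0%R.
    by rewrite mulr0 marg_ge0.
  by rewrite divfK.
by move=> w [_ <-]; rewrite !marg_restr ?subsetIl // mulrAC.
Qed.

Lemma entropy_submod A B :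
  entropy p (A :|: B) + entropy p (A :&: B) <= entropy p A + entropy p B.
Proof.
set U := A :|: B; have ZU : A :&: B \subset U by rewrite subIset ?subsetUl.
rewrite (entropy_lift (subxx U)) (entropy_lift ZU).
rewrite (entropy_lift (subsetUl A B)) (entropy_lift (subsetUr A B)) -/U.
set m := marg p U; set q := fun w => (marg p A w * marg p B w / marg p (A :&: B) w)%R.
have s_ge0 X w : 0 <= (surprisal X w * m w)%:E.
  by rewrite lee_fin mulr_ge0 ?surprisal_ge0 ?marg_ge0.
have m_ge0 w : 0 <= (m w)%:E by rewrite lee_fin marg_ge0.
have q_ge0 w : 0 <= (q w)%:E by rewrite lee_fin divr_ge0 ?mulr_ge0 ?marg_ge0.
have pointwise w : vals U w ->
    (surprisal U w * m w)%:E + (surprisal (A :&: B) w * m w)%:E + (m w)%:E <=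
    (surprisal A w * m w)%:E + (surprisal B w * m w)%:E + (q w)%:E.
  move=> _; rewrite -!EFinD lee_fin /surprisal.
  have := @ln_submod_gap R (m w) (marg p A w) (marg p B w) (marg p (A :&: B) w).
  rewrite marg_ge0 !marg_le_subset ?subsetUl ?subsetUr ?subsetIl // => /(_ isT isT isT isT).
  rewrite /q; lra.
have := le_esum pointwise.
rewrite !esumD ?esum_marg; try by move=> w _; rewrite ?adde_ge0.
move=> le1; rewrite -(@leeD2rE _ 1) //; apply: le_trans le1 _.
by rewrite leeD2l // esum_coupling_le1.
Qed.

Lemma entropy_subadd A B : entropy p (A :|: B) <= entropy p A + entropy p B.
Proof. by apply: le_trans (entropy_submod A B); exact: leeDl (entropy_ge0 _). Qed.

Lemma entropy_lt_pinfty : finite_entropies p -> forall A, entropy p A < +oo.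
Proof.
move=> fin A; rewrite -[A]set_enum.
elim: (enum A) => [|x s IH]; first by rewrite set_nil entropy_set0 ltry.
rewrite set_cons; exact: le_lt_trans (entropy_subadd _ _) (lte_add_pinfty (fin x) IH).
Qed.

End Entropy.

Lemma valid_hvalid (R : realType) n (p : outcome n -> R) (h : {set 'I_n} -> R) :
  (forall A, entropy p A = (h A)%:E) -> forall K, valid p K <-> hvalid h K.
Proof.
move=> hE K; rewrite /valid /hvalid /centropy /hc !hE.
rewrite (eq_bigr (fun Q => (h (Q :|: K.1) - h K.1)%:E)) => [|Q _]; last by rewrite !hE.
by rewrite sumEFin -!EFinB; split=> [[/subr0_eq]|->] //; rewrite subrr.
Qed.

Lemma valid_canform_eq (R : realType) n (p : outcome n -> R) (K K' : CMI n) :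
  is_pmf p -> finite_entropies p ->
  canform_eq (canform K) (canform K') -> valid p K <-> valid p K'.
Proof.
move=> pmf fin eqKK'; pose h A := fine (entropy p A).
have hE A : entropy p A = (h A)%:E.
  by rewrite fineK // ge0_fin_numE ?entropy_ge0 ?entropy_lt_pinfty.
rewrite !(valid_hvalid hE); apply: hvalid_canform_eq eqKK' => [A B AB|A B].
  by rewrite -lee_fin -!hE entropy_mono.
by rewrite -lee_fin !EFinD -!hE entropy_submod.
Qed.

Lemma sumr_count (R : pzSemiRingType) (I : Type) (s : seq I) (a : pred I) :
  \sum_(x <- s) (a x)%:R = (count a s)%:R :> R.
Proof.
by elim: s => [|x s IH]; rewrite ?big_nil // big_cons IH natrD.
Qed.

Lemma setI_bigcup_seq_neq0 (I : finType) (A : {set I}) (s : seq {set I}) :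
  (A :&: \bigcup_(Q <- s) Q != set0) = has (fun Q => A :&: Q != set0) s.
Proof.
elim: s => [|Q s IH]; first by rewrite big_nil setI0 eqxx.
by rewrite big_cons setIUr setU_eq0 negb_and IH.
Qed.

Section TestDistribution.
Local Open Scope classical_set_scope.
Variables (R : realType) (n : nat) (T : {set 'I_n}).
Implicit Types (A : {set 'I_n}) (x y : outcome n).

(* X is [out0] or [outT] with probability 1/2 each, so X_A is a fair bit if A
   meets T and is constant otherwise. *)
Definition out0 : outcome n := [ffun=> 0%N].
Definition outT : outcome n := [ffun i => nat_of_bool (i \in T)].

Definition test_pmf x : R := 2^-1 * (x == out0)%:R + 2^-1 * (x == outT)%:R.

Definition test_rank A : R := - ln 2^-1 * (T :&: A != set0)%:R.

Lemma half_ge0 : 0 <= 2^-1 :> R. Proof. by rewrite invr_ge0. Qed.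

Lemma oppr_ln_half_gt0 : 0 < - ln 2^-1 :> R.
Proof. by rewrite oppr_gt0 ln_lt0 // invr_gt0 invf_lt1 ?ltr0n ?ltr1n. Qed.

Lemma esum_test_pmf (S : set (outcome n)) :
  (\esum_(x in S) (test_pmf x)%:E =
   (if out0 \in S then 2^-1 else 0)%:E + (if outT \in S then 2^-1 else 0)%:E)%E.
Proof.
rewrite (fun_if EFin) (fun_if EFin) -!esum_dirac ?half_ge0 // -esumD.
- by apply: eq_esum => x _; rewrite -EFinD.
- by move=> x _; rewrite lee_fin mulr_ge0 ?half_ge0.
- by move=> x _; rewrite lee_fin mulr_ge0 ?half_ge0.
Qed.

Lemma test_pmf_is_pmf : is_pmf test_pmf.
Proof.
split=> [x|]; first by rewrite addr_ge0 // mulr_ge0 ?half_ge0.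
rewrite esum_test_pmf !ifT; try exact: mem_set.
by rewrite -EFinD; congr EFin; field.
Qed.

Lemma marg_test_pmf A y : vals A y ->
  marg test_pmf A y = 2^-1 * (y == restr A out0)%:R + 2^-1 * (y == restr A outT)%:R.
Proof.
move=> Vy; rewrite /marg -/(agree A y) esum_test_pmf.
have inE' z : (z \in agree A y) = (y == restr A z).
  apply/idP/eqP => [/set_mem zy|->]; last by apply: mem_set => i iA; rewrite ffunE iA.
  by apply/ffunP => i; rewrite ffunE; case: ifPn => [/zy ->|/Vy].
rewrite !inE' -EFinD /=.
by case: (y == _); case: (y == _); rewrite ?mulr0 ?mulr1 ?addr0 ?add0r.
Qed.

Lemma restr_outT_disjoint A : T :&: A = set0 -> restr A outT = restr A out0.
Proof.
move=> TA; apply/ffunP => i; rewrite !ffunE; case: ifP => // iA.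
by move: TA => /setP/(_ i); rewrite !inE iA andbT => ->.
Qed.

Lemma restr_outT_meet A : T :&: A != set0 -> restr A out0 != restr A outT.
Proof.
case/set0Pn=> i; rewrite inE => /andP[iT iA]; apply/eqP => /ffunP/(_ i).
by rewrite !ffunE iA iT.
Qed.

Lemma entropy_test_pmf A : entropy test_pmf A = (test_rank A)%:E.
Proof.
rewrite /entropy /test_rank -/(vals A).
have [TA|TA] := eqVneq (T :&: A) set0.
  rewrite mulr0 esum1 // => y Vy; rewrite marg_test_pmf // restr_outT_disjoint //.
  case: (y == _); rewrite ?mulr0 ?addr0 ?mul0r ?oppr0 //.
  by rewrite -mulrDl (_ : 2^-1 + 2^-1 = 1 :> R) ?mul1r ?ln1 ?mulr0 ?oppr0 //; field.
set c := - (2^-1 * ln (2^-1 : R)).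
have c_ge0 : 0 <= c by rewrite /c -mulrN mulr_ge0 ?half_ge0 ?ltW ?oppr_ln_half_gt0.
transitivity (\esum_(y in vals A) ((c * (y == restr A out0)%:R)%:E +
                                   (c * (y == restr A outT)%:R)%:E))%E.
  apply: eq_esum => y Vy; rewrite -EFinD marg_test_pmf // /c; congr EFin.
  have /negPf r0T := restr_outT_meet TA.
  have [->|y0] := eqVneq y (restr A out0).
    by rewrite r0T /= mulr1n mulr0n !mulr1 !mulr0 !addr0.
  have [_|_] := eqVneq y (restr A outT).
    by rewrite /= mulr1n mulr0n !mulr1 !mulr0 !add0r.
  by rewrite /= mulr0n !mulr0 addr0 mul0r oppr0.
rewrite esumD; try by move=> y _; rewrite lee_fin mulr_ge0.
rewrite !esum_dirac // !ifT; try by apply: mem_set; exact: vals_restr.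
by rewrite -EFinD mulr1; congr EFin; rewrite /c; field.
Qed.

Lemma test_pmf_finite_entropies : finite_entropies test_pmf.
Proof. by move=> i; rewrite entropy_test_pmf ltry. Qed.


Lemma hvalid_test_rank K : hvalid test_rank K <-> test_valid T K.
Proof.
rewrite /hvalid /test_valid /hc /test_rank.
have [TC|TC] := eqVneq (T :&: K.1) set0 => /=; last first.
  have meet X : T :&: (X :|: K.1) != set0.
    by rewrite setIUr setU_eq0 negb_and TC orbT.
  by rewrite meet subrr big1 // => Q _; rewrite meet subrr.
have meetE X : T :&: (X :|: K.1) = T :&: X by rewrite setIUr TC setU0.
rewrite meetE !mulr0 !subr0; under eq_bigr do rewrite meetE subr0.
rewrite -mulr_sumr sumr_count setI_bigcup_seq_neq0 has_count.
split=> [/mulfI|]; last by case: (count _ _) => [|[|]].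
move=> /(_ (lt0r_neq0 oppr_ln_half_gt0))/eqP; rewrite eqr_nat.
by case: (count _ _) => [|[|]].
Qed.

End TestDistribution.

Theorem mainTheorem1 (R : realType) (n : nat) (K K' : CMI n) :
  pure K -> pure K' ->
  (cmi_equiv R K K' <-> canform_eq (canform K) (canform K')).
Proof.
move=> pK pK'; split=> [equiv|eqKK' p pmf fin]; last exact: valid_canform_eq.
apply: canform_eq_of_test_valid => // T.
have := equiv _ (test_pmf_is_pmf R T) (test_pmf_finite_entropies R T).
rewrite !(valid_hvalid (entropy_test_pmf R T)) !hvalid_test_rank.
by case=> *; apply/idP/idP.
Qed.
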